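(* Consider a $(1+\varepsilon)$-adversarial sampling process (as in the context) on $k$ elements with $0<\varepsilon<1/2$ and initial weights normalized so that $\sum_{e\in E_0}w_0(e)=k$. Let $\ell_{max}$ be the largest $\ell\in\{1,2,\ldots,\lfloor |S_0|/2\rfloor\}$ that is bad, if such an $\ell$ exists, and $\ell_{max}=1$ otherwise. Then, for every realization of the process and every $i\in\{0,1,\ldots,k-1\}$, \[ \frac{w_i(E_i)}{k-i}\le 90\,\ell_{max}. \]
   Context: The $(1+\varepsilon)$-adversarial sampling process: initially there is a set $E_0$ of $k$ elements with nonnegative weights $w_0$. In round $i$, let $D_i$ be the distribution on $E_i$ with $\Pr_{D_i}(e)=w_i(e)/\sum_{e'\in E_i}w_i(e')$; an adversary chooses any distribution $D_i^\varepsilon$ on $E_i$ with $(1-\varepsilon)\Pr_{D_i}(e)\le\Pr_{D_i^\varepsilon}(e)\le(1+\varepsilon)\Pr_{D_i}(e)$ for all $e$; an element $e_{i+1}$ is sampled from $D_i^\varepsilon$ and $E_{i+1}=E_i\setminus\{e_{i+1}\}$; then the adversary chooses weights $0\le w_{i+1}(e)\le w_i(e)$ for $e\in E_{i+1}$. The adversary's choices may depend on the history. Notation: for $E\subseteq E_i$, $w_i(E)=\sum_{e\in E}w_i(e)$. For each $i$, partition $E_i=B_i\sqcup M_i\sqcup S_i$ where $e\in B_i$ iff $w_i(e)\ge 80$, $e\in M_i$ iff $2<w_i(e)<80$, and $e\in S_i$ iff $w_i(e)\le 2$. For $\ell\in\{1,\ldots,|S_0|\}$, $i_\ell$ is the smallest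 $i$ with $|S_i|=\ell$. An $\ell\in\{1,\ldots,\lfloor|S_0|/2\rfloor\}$ is called bad if both $w_{i_{2\ell}}(B_{i_{2\ell}})\le 8\ell$ and $w_{i_\ell}(B_{i_\ell})>4\ell$; otherwise it is good. *)

From HB Require Import structures.
From mathcomp Require Import all_boot all_order all_algebra.
Set Implicit Arguments. Unset Strict Implicit. Unset Printing Implicit Defensive.
Import Order.TTheory GRing.Theory Num.Theory.
Local Open Scope ring_scope.

(* A realization of the (1+eps)-adversarial sampling process
   on the finite ground set T (|T| = k):
   - e (i+1) : T is the element sampled in round i (i = 0..k-1);
   - w i : T -> R are the weights w_i (only their values on E_i matter);
   - p i : T -> R is the adversary's distribution D_i^eps in round i. *)

Section Process.
Variables (R : realFieldType) (T : finType).
Variables (e : nat -> T) (w : nat -> T -> R).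

Definition Eset (i : nat) : {set T} :=
  [set x | x \notin [seq e j | j <- iota 1 i]].

Definition wsum (i : nat) (A : {set T}) : R := \sum_(x in A) w i x.

Definition Bset (i : nat) : {set T} := [set x in Eset i | 80%:R <= w i x].
Definition Mset (i : nat) : {set T} :=
  [set x in Eset i | (2%:R < w i x) && (w i x < 80%:R)].
Definition Sset (i : nat) : {set T} := [set x in Eset i | w i x <= 2%:R].

Definition is_first_idx (l i : nat) : Prop :=
  #|Sset i| = l /\ forall j, (j < i)%N -> #|Sset j| <> l.

Definition bad (l : nat) : Prop :=
  exists i1 i2, is_first_idx l i1 /\ is_first_idx (2 * l) i2 /\
    wsum i2 (Bset i2) <= (8 * l)%:R /\ (4 * l)%:R < wsum i1 (Bset i1).

Definition adv_realization (eps : R) (p : nat -> T -> R) : Prop :=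
  (forall x, 0 <= w 0 x) /\
  forall i, (i < #|T|)%N ->
    [/\ e i.+1 \in Eset i,
        (forall x, x \in Eset i.+1 -> 0 <= w i.+1 x /\ w i.+1 x <= w i x) &
        (0 < wsum i (Eset i) ->
          [/\ forall x, x \in Eset i ->
                (1 - eps) * (w i x / wsum i (Eset i)) <= p i x /\
                p i x <= (1 + eps) * (w i x / wsum i (Eset i)),
              forall x, x \notin Eset i -> p i x = 0,
              \sum_(x in Eset i) p i x = 1 &
              0 < p i (e i.+1)])].

End Process.

From HB Require Import structures.
From mathcomp Require Import all_boot all_order all_algebra.
From mathcomp Require Import zify.
Import Order.TTheory GRing.Theory Num.Theory.
Local Open Scope ring_scope.

(* Every element of E_i outside B_i weighs less than 80, so
   w_i(E_i) <= w_i(B_i) + 80 (k - i), and it remains to show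
   w_i(B_i) <= 8 lmax (k - i).  The weight of B is non-increasing in i, and
   |S_i| drops by at most one per round and ends at 0, so every l between
   |S_i| and |S_0| is hit at a first index i_l <= i.  Downward induction on l
   gives w_{i_l}(B_{i_l}) <= 4 l above the last bad value: if 2 l > |S_0| this
   follows from w_0(B_0) <= k <= 2 |S_0|, and otherwise the bound 8 l at
   i_{2l} and goodness of l give it.  Taking l = max(|S_i|, lmax + 1), which
   is at most max(k - i, 2 lmax), concludes.  Neither the sampling
   distributions nor eps play a role: the bound holds for any removal order
   with non-increasing weights. *)

Lemma ler_sum_subset [R : numDomainType] [I : finType] [A B : {set I}]
    (F : I -> R) :
  A \subset B -> (forall x, x \in B :\: A -> 0 <= F x) ->
  \sum_(x in A) F x <= \sum_(x in B) F x.
Proof.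
move=> subAB F_ge0; rewrite [leRHS](big_setID A) /= (setIidPr subAB) lerDl.
exact: sumr_ge0.
Qed.

Lemma first_hit (f : nat -> nat) [l n] :
  (forall i, (f i <= (f i.+1).+1)%N) -> (l <= f 0)%N -> (f n <= l)%N ->
  exists2 i, (i <= n)%N & f i = l /\ forall j, (j < i)%N -> f j <> l.
Proof.
move=> f_stepS le_l_f0 le_fn_l.
have ex_le : exists i, (f i <= l)%N by exists n.
case: (ex_minnP ex_le) => i le_fi_l min_i.
have gt_before_i j : (j < i)%N -> (l < f j)%N.
  by move=> lt_ji; rewrite ltnNge; apply/negP => /min_i; lia.
exists i; first exact: min_i.
split=> [|j /gt_before_i]; last lia.
case: i le_fi_l gt_before_i {min_i} => [|i] le_fi_l gt_before_i; first lia.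
have := gt_before_i i (ltnSn i); have := f_stepS i; lia.
Qed.

Section AdversarialProcess.
Variables (R : realFieldType) (T : finType) (e : nat -> T) (w : nat -> T -> R).

Local Notation E := (Eset e).
Local Notation B := (Bset e w).
Local Notation S := (Sset e w).
Local Notation wB i := (wsum w i (B i)).

Lemma EsetS i : E i.+1 = E i :\ e i.+1.
Proof.
apply/setP => x; rewrite in_setD1 !in_set -(addn1 i) iotaD map_cat mem_cat.
by rewrite add1n addn1 mem_seq1 negb_or andbC.
Qed.

Lemma in_EsetS i x : (x \in E i.+1) = (x != e i.+1) && (x \in E i).
Proof. by rewrite EsetS in_setD1. Qed.

Lemma Eset0 : E 0 = setT.
Proof. by apply/setP => x; rewrite !inE. Qed.

Hypothesis w0_ge0 : forall x, 0 <= w 0 x.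
Hypothesis e_in_Eset : forall i, (i < #|T|)%N -> e i.+1 \in E i.
Hypothesis w_step : forall i, (i < #|T|)%N ->
  forall x, x \in E i.+1 -> w i.+1 x <= w i x.
Hypothesis wsum_E0 : wsum w 0 (E 0) = #|T|%:R.

Lemma in_Bset i x : (x \in B i) = (x \in E i) && (80%:R <= w i x).
Proof. by rewrite /Bset in_set. Qed.

Lemma in_Sset i x : (x \in S i) = (x \in E i) && (w i x <= 2%:R).
Proof. by rewrite /Sset in_set. Qed.

Lemma card_Eset i : (i <= #|T|)%N -> #|E i| = (#|T| - i)%N.
Proof.
elim: i => [|i IH] le_iT; first by rewrite Eset0 cardsT subn0.
have := cardsD1 (e i.+1) (E i).
rewrite e_in_Eset // IH ?(ltnW le_iT) // -EsetS; lia.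
Qed.

Lemma Eset_eq0 i : (#|T| <= i)%N -> E i = set0.
Proof.
move=> /subnK <-; elim: (i - #|T|)%N => [|n IH].
  by apply/eqP; rewrite -cards_eq0 card_Eset // subnn.
by apply/eqP; rewrite addSn EsetS IH -subset0 subD1set.
Qed.

Lemma w_leS [i x] : x \in E i.+1 -> w i.+1 x <= w i x.
Proof.
case: (ltnP i #|T|) => [lt_iT | le_Ti]; first exact: w_step.
by rewrite Eset_eq0 ?inE //; apply: leqW.
Qed.

Lemma wB_leS i : wB i.+1 <= wB i.
Proof.
have subB : B i.+1 \subset B i.
  apply/subsetP => x; rewrite !in_Bset => /andP [Ex1 le80].
  have Ex : x \in E i by move: Ex1; rewrite in_EsetS => /andP [].
  by rewrite Ex (le_trans le80 (w_leS Ex1)).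
apply: le_trans (ler_sum_subset (w i) subB _).
  by apply: ler_sum => x; rewrite in_Bset => /andP [Ex _]; apply: w_leS.
move=> x; rewrite in_setD (in_Bset i) => /andP [_ /andP [_ le80]].
exact: le_trans (ler0n _ 80) le80.
Qed.

Lemma wB_antitone [i j] : (i <= j)%N -> wB j <= wB i.
Proof.
apply: (homo_leq (f := fun i => wB i) (r := fun x y => y <= x)) => //.
- by move=> y x z le_yx le_zy; apply: le_trans le_zy le_yx.
- exact: wB_leS.
Qed.

Lemma card_Sset_leS i : (#|S i| <= #|S i.+1|.+1)%N.
Proof.
have subS : S i :\ e i.+1 \subset S i.+1.
  apply/subsetP => x; rewrite in_setD1 !in_Sset => /andP [ne_x /andP [Ex le2]].
  have Ex1 : x \in E i.+1 by rewrite in_EsetS ne_x.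
  by rewrite Ex1 (le_trans (w_leS Ex1)).
rewrite (cardsD1 (e i.+1)) -add1n.
exact: leq_add (leq_b1 _) (subset_leq_card subS).
Qed.

Lemma card_Sset_T : #|S #|T| | = 0%N.
Proof.
apply/eqP; rewrite cards_eq0 -subset0.
by apply/subsetP => x; rewrite in_Sset Eset_eq0 ?inE.
Qed.

Lemma wB0_le : wB 0 <= #|T|%:R.
Proof.
rewrite -wsum_E0; apply: ler_sum_subset => [|x _]; last exact: w0_ge0.
by apply/subsetP => x; rewrite in_Bset => /andP [].
Qed.

Lemma card_T_le_Sset0 : (#|T| <= 2 * #|S 0|)%N.
Proof.
have heavy : (2 * #|~: S 0|)%:R <= (#|T|%:R : R).
  rewrite -wsum_E0 Eset0 natrM mulr_natr -sumr_const.
  apply: le_trans (ler_sum_subset (w 0) (subsetT _) _) => [|x _]; last first.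
    exact: w0_ge0.
  apply: ler_sum => x; rewrite in_setC in_Sset Eset0 in_setT /= -ltNge.
  exact: ltW.
have := cardsC (S 0); rewrite ler_nat in heavy; lia.
Qed.

Lemma wsum_Eset_le i : wsum w i (E i) <= wB i + (80 * #|E i|)%:R.
Proof.
have subBE : B i \subset E i by apply/subsetP => x; rewrite in_Bset => /andP [].
rewrite /wsum (big_setID (B i)) /= (setIidPr subBE) lerD2l.
apply: (@le_trans _ _ (\sum_(x in E i :\: B i) (80%:R : R))).
  apply: ler_sum => x; rewrite in_setD in_Bset.
  by case: (x \in E i); rewrite ?andbT -?ltNge // => /ltW.
rewrite sumr_const natrM mulr_natr ler_wpMn2l // subset_leq_card //.
exact: subsetDl.
Qed.

Section GoodAbove.
Variable c : nat.
Hypothesis c_gt0 : (0 < c)%N.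
Hypothesis good_from_c : forall l, (c <= l <= #|S 0| %/ 2)%N -> ~ bad e w l.

Lemma wB_le_of_card_Sset_le [l i] :
  (c <= l)%N -> (#|S i| <= l)%N -> wB i <= (4 * l)%:R.
Proof.
have [n] := ubnP (#|S 0| - l)%N; elim: n => // n IH in l i *.
move=> lt_n le_cl le_Si_l.
case: (ltnP #|S 0| (2 * l)) => [lt_S0_2l | le_2l_S0].
  apply: le_trans (wB_antitone (leq0n i)) _; apply: le_trans wB0_le _.
  by rewrite ler_nat; have := card_T_le_Sset0; lia.
have le_l_S0 : (l <= #|S 0|)%N by lia.
have le_ST_2l : (#|S #|T| | <= 2 * l)%N by rewrite card_Sset_T.
have [i1 le_i1i first1] := first_hit _ card_Sset_leS le_l_S0 le_Si_l.
have [i2 _ first2] := first_hit _ card_Sset_leS le_2l_S0 le_ST_2l.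
have wB_i2 : wB i2 <= (4 * (2 * l))%:R.
  by apply: IH; [lia | lia | rewrite (proj1 first2)].
rewrite mulnA in wB_i2.
apply: le_trans (wB_antitone le_i1i) _; rewrite leNgt; apply/negP => gt_i1.
apply: (good_from_c l); first by rewrite le_cl leq_divRL //; lia.
by exists i1, i2.
Qed.

Lemma wsum_Eset_avg_le lmax i : (c <= 2 * lmax)%N -> (i < #|T|)%N ->
  wsum w i (E i) / (#|T| - i)%:R <= (90 * lmax)%:R.
Proof.
move=> le_c_2lmax lt_iT.
have cardE : #|E i| = (#|T| - i)%N by apply: card_Eset; apply: ltnW.
have le_Si_Ei : (#|S i| <= #|T| - i)%N.
  rewrite -cardE subset_leq_card //.
  by apply/subsetP => x; rewrite in_Sset => /andP [].
have wB_i := wB_le_of_card_Sset_le (leq_maxr #|S i| c) (leq_maxl #|S i| c).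
rewrite ler_pdivrMr ?ltr0n ?subn_gt0 // -natrM.
apply: le_trans (wsum_Eset_le i) _; rewrite cardE.
apply: le_trans (lerD wB_i (lexx _)) _; rewrite -natrD ler_nat.
have m_gt0 : (0 < #|T| - i)%N by rewrite subn_gt0.
have lmax_gt0 : (0 < lmax)%N by lia.
have : (maxn #|S i| c <= 2 * lmax * (#|T| - i))%N.
  by rewrite geq_max; apply/andP; split; nia.
nia.
Qed.

End GoodAbove.
End AdversarialProcess.

Theorem lemma3 (R : realFieldType) (T : finType) (k : nat)
  (e : nat -> T) (w : nat -> T -> R) (p : nat -> T -> R) (eps : R)
  (lmax : nat) :
  #|T| = k ->
  0 < eps -> eps < 2^-1 ->
  adv_realization e w eps p ->
  wsum w 0 (Eset e 0) = k%:R ->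
  ((bad e w lmax /\ (1 <= lmax <= #|Sset e w 0| %/ 2)%N /\
     (forall l, (lmax < l <= #|Sset e w 0| %/ 2)%N -> ~ bad e w l))
   \/
   ((forall l, (1 <= l <= #|Sset e w 0| %/ 2)%N -> ~ bad e w l) /\ lmax = 1%N)) ->
  forall i, (i < k)%N ->
    wsum w i (Eset e i) / (k - i)%:R <= (90 * lmax)%:R.
Proof.
move=> <- _ _ [w0_ge0 step] wsum_E0 lmax_spec i lt_iT.
have e_in_Eset j : (j < #|T|)%N -> e j.+1 \in Eset e j.
  by move=> /step [].
have w_step j : (j < #|T|)%N ->
    forall x, x \in Eset e j.+1 -> w j.+1 x <= w j x.
  by move=> /step [_ w_le _] x /w_le [].
have avg_le := @wsum_Eset_avg_le R T e w w0_ge0 e_in_Eset w_step wsum_E0.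
case: lmax_spec => [[_ [/andP [lmax_gt0 _] good]] | [good ->]].
- by apply: (avg_le lmax.+1 _ good) => //; lia.
- exact: (avg_le 1%N _ good).
Qed.
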